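(* Let $S(A)$ be a regular Stanley sequence with character $\lambda(A)$. Then $\lambda(A)\ge 0$, and $\lambda(A)\ne 1$, $\lambda(A)\ne 3$.
   Context: A set of non-negative integers is 3-free if no three of its elements form an arithmetic progression. For a finite 3-free set $A=\{a_0<\cdots<a_k\}$ of non-negative integers, the Stanley sequence $S(A)=(a_n)_{n\ge0}$ is the increasing sequence with initial terms $a_0,\ldots,a_k$ in which each subsequent $a_{n+1}$ is the smallest integer greater than $a_n$ such that $\{a_0,\ldots,a_{n+1}\}$ is 3-free. Throughout, Stanley sequences are in root position ($a_0=0$). A Stanley sequence $(a_n)$ is independent with character $\lambda$ if for all sufficiently large $k$: $a_{2^k+i}=a_{2^k}+a_i$ for $0\le i<2^k$, and $a_{2^k}=2a_{2^k-1}-\lambda+1$. A Stanley sequence $(a_n)$ is regular with character $\lambda$ if there exist a constant $\sigma$ and an independent Stanley sequence $(a'_n)$ of character $\lambda$ such that for all large $k$ and $0\le i<2^k$: $a_{2^k-\sigma+i}=a_{2^k-\sigma}+a'_i$ and $a_{2^k-\sigma}=2a_{2^k-\sigma-1}-\lambda+1$ (these data are unique). *)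

From mathcomp Require Import all_boot all_order all_algebra.
Set Implicit Arguments. Unset Strict Implicit. Unset Printing Implicit Defensive.
Import Order.TTheory GRing.Theory Num.Theory.

Definition three_free (s : seq nat) : Prop :=
  forall x y z, x \in s -> y \in s -> z \in s -> x < y -> y < z -> x + z <> 2 * y.

Definition stanley_initial (A : seq nat) : Prop :=
  [/\ A <> [::], sorted ltn A, head 1 A = 0 & three_free A].

Definition stanley (A : seq nat) (a : nat -> nat) : Prop :=
  [/\ stanley_initial A,
      (forall i, i < size A -> a i = nth 0 A i) &
      (forall n, (size A).-1 <= n ->
         [/\ a n < a n.+1,
             three_free (mkseq a n.+2) &
             forall m, a n < m -> m < a n.+1 -> ~ three_free (rcons (mkseq a n.+1) m)])].

Definition is_stanley_seq (a : nat -> nat) : Prop := exists A, stanley A a.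

Definition independent (a : nat -> nat) (lambda : int) : Prop :=
  exists K, forall k, K <= k ->
    (forall i, i < 2 ^ k -> a (2 ^ k + i) = a (2 ^ k) + a i) /\
    (Posz (a (2 ^ k)%N) = 2 * Posz (a (2 ^ k).-1%N) - lambda + 1)%R.

(* Evaluate a nat-indexed sequence at an integer index (used only at
   indices that are nonnegative for all large k). *)
Definition at_int (a : nat -> nat) (z : int) : nat := a `|z|%N.

Definition regular (a : nat -> nat) (lambda : int) : Prop :=
  exists (sigma : int) (a' : nat -> nat),
    is_stanley_seq a' /\ independent a' lambda /\
    exists K, forall k, K <= k ->
      (forall i, i < 2 ^ k ->
         at_int a (Posz (2 ^ k)%N - sigma + Posz i)%R
           = at_int a (Posz (2 ^ k)%N - sigma)%R + a' i) /\
      (Posz (at_int a (Posz (2 ^ k)%N - sigma))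
        = 2 * Posz (at_int a (Posz (2 ^ k)%N - sigma - 1)) - lambda + 1)%R.

(* Only the independent sequence a' behind a regular sequence matters: it is a
   Stanley sequence with the same character, and for large k its terms satisfy
   c = 2M - lambda + 1, where M = a'(2^k - 1) and c = a'(2^k).  Greedy choice
   gives c <= 2M + 1 (2M + 1 is never blocked), so lambda >= 0; lambda = 1
   yields the progression 0, M, 2M.  For lambda = 3 the next pivot is 3c; then
   M - 2 cannot occur (it would produce c + M - 2, 3c, 4c + M), nor can M - 1
   (0, M - 1, c), so the skipped values 2M - 5, 2M - 4, 2M - 3 must be blocked
   by 5, 4, 3 together with M, and 3, 4, 5 is a progression. *)
From mathcomp Require Import all_boot all_order all_algebra.
From mathcomp Require Import zify.
Import Order.TTheory GRing.Theory Num.Theory.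

Set Implicit Arguments.
Unset Strict Implicit.

Lemma mem_mkseqP (T : eqType) (f : nat -> T) n x :
  reflect (exists2 i, i < n & x = f i) (x \in mkseq f n).
Proof.
apply: (iffP mapP) => -[i]; rewrite ?mem_iota ?add0n => Hi ->; exists i => //.
by rewrite mem_iota add0n.
Qed.

Lemma mem_mkseq (T : eqType) (f : nat -> T) n i : i < n -> f i \in mkseq f n.
Proof. by move=> Hi; apply/mem_mkseqP; exists i. Qed.

Lemma three_free_sub s t : {subset s <= t} -> three_free t -> three_free s.
Proof. by move=> sub_st Ht x y z /sub_st Hx /sub_st Hy /sub_st Hz; apply: Ht. Qed.

Lemma three_free_rcons s m :
  three_free s -> (forall x, x \in s -> x < m) ->
  (forall x y, x \in s -> y \in s -> x < y -> x + m <> 2 * y) ->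
  three_free (rcons s m).
Proof.
move=> Hs Hm Hblock x y z; rewrite !mem_rcons !in_cons.
case/predU1P=> [->|Hx]; case/predU1P=> [->|Hy]; case/predU1P=> [->|Hz]; try lia.
- by have := Hm y Hy; lia.
- by have := Hm z Hz; lia.
- by move=> Hxy _; apply: Hblock.
- exact: Hs.
Qed.

Lemma pred_exp2S k : (2 ^ k.+1).-1 = 2 ^ k + (2 ^ k).-1.
Proof. by have := expn_gt0 2 k; rewrite expnS; lia. Qed.

Section StanleySequence.

Variables (A : seq nat) (b : nat -> nat).
Hypothesis Hb : stanley A b.

Lemma stanley0 : b 0 = 0.
Proof.
by case: Hb => -[]; case: A => // x s _ _ /= -> _ ->.
Qed.

Lemma stanley_ltS i : b i < b i.+1.
Proof.
case: Hb => -[_ sortedA _ _] initA step.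
case: (ltnP i (size A).-1) => Hi; last by case: (step i Hi).
rewrite !initA; try lia.
by apply: (sorted_ltn_nth ltn_trans) => //; rewrite inE; lia.
Qed.

Lemma stanley_lt : {homo b : i j / i < j}.
Proof. by apply: homo_ltn; [exact: ltn_trans | exact: stanley_ltS]. Qed.

Lemma stanley_le : {homo b : i j / i <= j}.
Proof. by apply: ltnW_homo; exact: stanley_lt. Qed.

Lemma stanley_geq i : i <= b i.
Proof. by elim: i => // i IH; have := stanley_ltS i; lia. Qed.

Lemma stanley_three_free N : three_free (mkseq b N).
Proof.
case: Hb => _ _ step; pose n := maxn N (size A).
have [_ tf _] := step n (leq_trans (leq_pred _) (leq_maxr _ _)).
apply: three_free_sub tf => _ /mem_mkseqP[i Hi ->].
by apply: mem_mkseq; lia.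
Qed.

Lemma stanley_noAP i j l : b i < b j -> b j < b l -> b i + b l <> 2 * b j.
Proof.
by apply: (stanley_three_free (N := (maxn i (maxn j l)).+1)); apply: mem_mkseq; lia.
Qed.

Lemma stanley_gap n m : (size A).-1 <= n -> b n < m < b n.+1 ->
  exists i j, [/\ i <= n, j <= n, b i < b j & b i + m = 2 * b j].
Proof.
move=> Hn /andP[Hlo Hhi].
pose blocked := [exists i : 'I_n.+1, exists j : 'I_n.+1,
                   (b i < b j) && (b i + m == 2 * b j)].
case: (boolP blocked) => [/existsP[i /existsP[j /andP[Hij /eqP E]]]|Hfree].
  by exists i, j; split; rewrite // -ltnS.
case: Hb => _ _ /(_ n Hn)[_ _ /(_ m Hlo Hhi)]; case.
apply: three_free_rcons; first exact: stanley_three_free.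
  move=> _ /mem_mkseqP[i Hi ->]; apply: leq_ltn_trans Hlo.
  by apply: stanley_le; rewrite -ltnS.
move=> _ _ /mem_mkseqP[i Hi ->] /mem_mkseqP[j Hj ->] Hij E.
case/negP: Hfree; apply/existsP; exists (Ordinal Hi); apply/existsP.
by exists (Ordinal Hj); rewrite /= Hij E eqxx.
Qed.

End StanleySequence.

Section IndependentCharacter.

Variables (A : seq nat) (b : nat -> nat) (lambda : int) (K : nat).
Hypothesis Hb : stanley A b.
Hypothesis Hshift : forall k i, K <= k -> i < 2 ^ k -> b (2 ^ k + i) = b (2 ^ k) + b i.
Hypothesis Hchar : forall k, K <= k ->
  (Posz (b (2 ^ k)) = 2 * Posz (b (2 ^ k).-1) - lambda + 1)%R.

Lemma large_scale : exists k, [/\ K <= k, (size A).-1 <= (2 ^ k).-1 & 6 <= (2 ^ k).-1].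
Proof.
exists (K + size A + 3); have := ltn_expl (K + size A) (ltnSn 1).
by rewrite [2 ^ (_ + 3)]expnD => ?; split; lia.
Qed.

Lemma character_ge0 : (0 <= lambda)%R.
Proof.
have [k [HK HA _]] := large_scale; have pos2k : 0 < 2 ^ k by rewrite expn_gt0.
have := Hchar HK; set M := b (2 ^ k).-1.
suff : b (2 ^ k) <= 2 * M + 1 by lia.
rewrite leqNgt; apply/negP => Hgt.
have [|i [j [_ Hj _ E]]] := stanley_gap Hb (m := 2 * M + 1) HA.
  by rewrite prednK // Hgt andbT; lia.
by have := stanley_le Hb Hj; lia.
Qed.

Lemma character_neq1 : lambda <> 1%R.
Proof.
move=> lambda1; have [k [HK _ _]] := large_scale.
have pred_lt : (2 ^ k).-1 < 2 ^ k by rewrite ltn_predL expn_gt0.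
have := Hchar HK; have := stanley_lt Hb pred_lt.
have := stanley_noAP Hb (i := 0) (j := (2 ^ k).-1) (l := 2 ^ k).
rewrite (stanley0 Hb) lambda1; lia.
Qed.

Section CharacterThree.

Hypothesis lambda3 : lambda = 3%R.
Variable k : nat.
Hypothesis HK : K <= k.

Let pred_lt : (2 ^ k).-1 < 2 ^ k.
Proof. by rewrite ltn_predL expn_gt0. Qed.

Lemma character3_pivot : b (2 ^ k) + 2 = 2 * b (2 ^ k).-1.
Proof.
by have := Hchar HK; rewrite lambda3; lia.
Qed.

Lemma character3_next_pivot : b (2 ^ k.+1) = 3 * b (2 ^ k).
Proof.
have HK1 : K <= k.+1 by apply: leqW.
have := Hchar HK1; rewrite pred_exp2S Hshift // lambda3.
have := character3_pivot; lia.
Qed.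

Lemma character3_avoid_pred1 j : b j <> b (2 ^ k).-1 - 1.
Proof.
move=> Ej; have := stanley_noAP Hb (i := 0) (j := j) (l := 2 ^ k).
have := stanley_lt Hb pred_lt; have := character3_pivot.
rewrite (stanley0 Hb) Ej; lia.
Qed.

Lemma character3_avoid_pred2 j : j < 2 ^ k -> b j <> b (2 ^ k).-1 - 2.
Proof.
move=> Hj Ej.
have HK1 : K <= k.+1 by apply: leqW.
have pred_next : (2 ^ k.+1).-1 < 2 ^ k.+1 by rewrite ltn_predL expn_gt0.
have := stanley_noAP Hb (i := 2 ^ k + j) (j := 2 ^ k.+1)
  (l := 2 ^ k.+1 + (2 ^ k.+1).-1).
rewrite !Hshift // character3_next_pivot.
rewrite pred_exp2S Hshift // Ej.
have := stanley_lt Hb pred_lt; have := character3_pivot; lia.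
Qed.

End CharacterThree.

Lemma character_neq3 : lambda <> 3%R.
Proof.
move=> lambda3; have [k [HK HA HM]] := large_scale.
have pivot := character3_pivot lambda3 HK; set M := b (2 ^ k).-1 in pivot.
have pos2k : 0 < 2 ^ k by rewrite expn_gt0.
have M_ge : 6 <= M := leq_trans HM (stanley_geq Hb _).
have small_term v : 3 <= v <= 5 -> exists i, b i = v.
  move=> /andP[v_ge3 v_le5].
  have [|i [j [_ Hj Hij E]]] := stanley_gap Hb (m := 2 * M - v) HA.
    by rewrite prednK //; apply/andP; lia.
  have := stanley_le Hb Hj; rewrite -/M => bj_le.
  have := character3_avoid_pred1 lambda3 HK (j := j).
  have j_lt : j < 2 ^ k by lia.
  have := character3_avoid_pred2 lambda3 HK j_lt.
  by exists i; lia.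
have [i3 E3] := small_term 3 isT; have [i4 E4] := small_term 4 isT.
have [i5 E5] := small_term 5 isT.
by apply: (stanley_noAP Hb (i := i3) (j := i4) (l := i5)); lia.
Qed.

End IndependentCharacter.

Theorem mainTheorem10 (A : seq nat) (a : nat -> nat) (lambda : int) :
  stanley A a -> regular a lambda ->
  (0 <= lambda)%R /\ lambda <> 1%R /\ lambda <> 3%R.
Proof.
move=> _ [_ [b [[A' Hb] [[K Hind] _]]]].
have Hshift k i : K <= k -> i < 2 ^ k -> b (2 ^ k + i) = b (2 ^ k) + b i.
  by move=> /Hind[+ _]; apply.
have Hchar k : K <= k -> Posz (b (2 ^ k)) = (2 * Posz (b (2 ^ k).-1) - lambda + 1)%R.
  by case/Hind.
split; first exact: character_ge0 Hb Hchar.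
split; first exact: character_neq1 Hb Hchar.
exact: character_neq3 Hb Hshift Hchar.
Qed.
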